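(* Fix $\mathbf{k}\neq 0$, $t\ge0$, $n\ge1$, and let $g$ be a function of $z$ analytic near the segment $[-i,i]$ of the imaginary axis. Let $\theta_j=\frac{j\pi}{n+1}$, $z_j=i\cos\theta_j$, $\alpha_j=\frac{\sin^2\theta_j}{n+1}$ and $\Delta\theta=\frac{\pi}{2(n+1)}$. Then $$\left|2|\mathbf{k}|\int_{-i}^{i}\sqrt{1+z^2}e^{zt}g(z)\,dz-2\pi i|\mathbf{k}|\sum_{j=1}^n g(z_j)e^{z_jt}\alpha_j\right|\le\frac23|\mathbf{k}|\Delta\theta^3\Big(3\max_{z\in[i\cos\Delta\theta,\,i]}|g(z)|+3\max_{z\in[-i,\,-i\cos\Delta\theta]}|g(z)|+\sum_{j=1}^n\max_{z\in I_j}|E(z)|\Big),$$ where $I_j$ is the segment of the imaginary axis between $i\cos(\theta_j-\Delta\theta)$ and $i\cos(\theta_j+\Delta\theta)$, and $$E(z)=e^{zt}\Big[(z^4+2z^2+1)\big(g''(z)+2t\,g'(z)+t^2g(z)\big)+5(z^3+z)\big(g'(z)+t\,g(z)\big)+(4z^2+2)g(z)\Big].$$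
   Context: The integral is along the segment of the imaginary axis from $-i$ to $i$. In the paper $g$ is given by $|\mathbf{k}|\,g(s/|\mathbf{k}|)=\hat U(x,\mathbf{k},s)$, where $\hat U$ is the Laplace–Fourier transform of a solution of the wave equation, and derivatives are with respect to $z=s/|\mathbf{k}|$. *)

From Stdlib Require Import Reals.
From Coquelicot Require Export Coquelicot.
Open Scope R_scope.

Definition Cexp (z : C) : C :=
  (exp (Re z) * cos (Im z), exp (Re z) * sin (Im z)).

(* principal square root of a complex number *)
Definition Csqrt (w : C) : C :=
  (sqrt ((Cmod w + Re w) / 2),
   (if Rlt_dec (Im w) 0 then -1 else 1) * sqrt ((Cmod w - Re w) / 2)).

Definition seg_integral (f : C -> C) (a b : C) : C :=
  RInt (V := C_R_CompleteNormedModule)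
       (fun s : R => Cmult (f (Cplus a (Cmult (RtoC s) (Cminus b a)))) (Cminus b a))
       0 1.

Fixpoint csum1 (f : nat -> C) (n : nat) : C :=
  match n with O => RtoC 0 | S m => Cplus (csum1 f m) (f (S m)) end.
Fixpoint rsum1 (f : nat -> R) (n : nat) : R :=
  match n with O => 0 | S m => rsum1 f m + f (S m) end.

Definition on_iseg (lo hi : R) (z : C) : Prop :=
  Re z = 0 /\ lo <= Im z <= hi.

Definition Cderiv_n (n : nat) (g : C -> C) : C -> C := Nat.iter n C_derive g.

(* g analytic near the segment [-i, i]: there is an open set U containing
   the segment on which g is complex-differentiable to all orders
   (equivalently, holomorphic, i.e. analytic, on U). *)
Definition analytic_near_iseg (g : C -> C) : Prop :=
  exists U : C -> Prop, open U /\ (forall z, on_iseg (-1) 1 z -> U z) /\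
    forall (m : nat) (z : C), U z -> ex_derive (Cderiv_n m g) z.

Definition theta (n j : nat) : R := INR j * PI / INR (n + 1).
Definition zpt (n j : nat) : C := Cmult Ci (RtoC (cos (theta n j))).
Definition alpha (n j : nat) : R := (sin (theta n j)) ^ 2 / INR (n + 1).
Definition dtheta (n : nat) : R := PI / (2 * INR (n + 1)).

Definition Efun (g : C -> C) (t : R) (z : C) : C :=
  let g0 := g z in
  let g1 := C_derive g z in
  let g2 := C_derive (C_derive g) z in
  let tt := RtoC t in
  Cmult (Cexp (Cmult z tt))
   (Cplus (Cplus
     (Cmult (Cplus (Cplus (Cpow z 4) (Cmult (RtoC 2) (Cpow z 2))) (RtoC 1))
            (Cplus (Cplus g2 (Cmult (Cmult (RtoC 2) tt) g1)) (Cmult (Cpow tt 2) g0)))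
     (Cmult (Cmult (RtoC 5) (Cplus (Cpow z 3) z)) (Cplus g1 (Cmult tt g0))))
     (Cmult (Cplus (Cmult (RtoC 4) (Cpow z 2)) (RtoC 2)) g0)).

From Stdlib Require Import Reals Lra Lia.
From Coquelicot Require Import Coquelicot.
Open Scope R_scope.

(* Parametrising the segment by z = i cos x turns the contour integral into
   i * int_0^pi F with F(x) = sin^2 x e^{zt} g(z), and the quadrature sum into
   i * 2 dtheta * sum_j F(theta_j): it is the composite midpoint rule for F with
   cells [theta_j - dtheta, theta_j + dtheta], the two end cells carrying no node.
   Since sin^2 x = 1 + z^2 and dz/dx = -i sin x, one computes F'' = -E(i cos x),
   so each midpoint cell contributes at most dtheta^3/3 max |E|, while on the end
   cells |F(x)| <= sin^2 x |g| gives dtheta^3/3 max |g|.  The complex-valued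
   estimate follows from the real one applied to every projection of F onto a
   unit direction. *)

Lemma Rabs_increment_le (r r' m m' : R -> R) (a b : R) :
  a <= b ->
  (forall x, a <= x <= b -> is_derive r x (r' x)) ->
  (forall x, a <= x <= b -> is_derive m x (m' x)) ->
  (forall x, a <= x <= b -> Rabs (r' x) <= m' x) ->
  Rabs (r b - r a) <= m b - m a.
Proof.
intros Hab Hr Hm Hb.
destruct (Req_dec a b) as [<- | Hne].
{ replace (r a - r a) with 0 by ring. rewrite Rabs_R0. lra. }
assert (Hsign : forall s, Rabs s = 1 -> s * (r b - r a) <= m b - m a).
{ intros s Hs.
  destruct (MVT_cor2 (fun x => s * r x - m x) (fun x => s * r' x - m' x) a b) as (c & Hc & Hac); [lra| |].
  - intros x Hx. apply is_derive_Reals.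
    apply (is_derive_minus (fun x => s * r x) m); [apply (is_derive_scal r) |]; auto.
  - assert (Hrc : s * r' c <= m' c).
    { eapply Rle_trans; [apply Rle_abs|]. rewrite Rabs_mult, Hs, Rmult_1_l. apply Hb. lra. }
    assert (Hle : (s * r' c - m' c) * (b - a) <= 0) by (apply Rmult_le_0_r; lra).
    lra. }
apply Rabs_le. split.
- assert (H := Hsign (-1) ltac:(rewrite Rabs_left; lra)). lra.
- assert (H := Hsign 1 Rabs_R1). lra.
Qed.

Lemma second_difference_le (phi phi1 phi2 : R -> R) (c d M x : R) :
  (forall y, is_derive phi y (phi1 y)) ->
  (forall y, is_derive phi1 y (phi2 y)) ->
  (forall y, c - d <= y <= c + d -> Rabs (phi2 y) <= M) ->
  0 <= x <= d ->
  Rabs (phi (c + x) + phi (c - x) - 2 * phi c) <= M * x ^ 2.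
Proof.
intros H1 H2 HM Hx.
assert (Hodd : forall y, 0 <= y <= x -> Rabs (phi1 (c + y) - phi1 (c - y)) <= 2 * M * y).
{ intros y Hy. replace (2 * M * y) with (M * (c + y) - M * (c - y)) by ring.
  apply (Rabs_increment_le phi1 phi2 (fun u => M * u) (fun _ => M)).
  - lra.
  - intros; apply H2.
  - intros; auto_derive; auto; ring.
  - intros u Hu. apply HM. lra. }
replace (phi (c + x) + phi (c - x) - 2 * phi c)
  with ((phi (c + x) + phi (c - x)) - (phi (c + 0) + phi (c - 0))) by (rewrite Rplus_0_r, Rminus_0_r; ring).
replace (M * x ^ 2) with (M * x ^ 2 - M * 0 ^ 2) by ring.
apply (Rabs_increment_le (fun y => phi (c + y) + phi (c - y)) (fun y => phi1 (c + y) - phi1 (c - y))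
         (fun y => M * y ^ 2) (fun y => 2 * M * y)); [lra | | | exact Hodd].
- intros y _. unfold Rminus.
  auto_derive; [split; [|split]; auto; eexists; apply H1|].
  rewrite !(is_derive_unique _ _ _ (H1 _)). ring.
- intros; auto_derive; auto; ring.
Qed.

Lemma continuous_of_derive (phi phi1 : R -> R) :
  (forall y, is_derive phi y (phi1 y)) -> forall y, continuous phi y.
Proof.
intros H y. apply (ex_derive_continuous (K := R_AbsRing) (V := R_NormedModule)). eexists. apply H.
Qed.

Lemma is_derive_RInt_upper (psi : R -> R) (a x : R) :
  (forall y, continuous psi y) -> is_derive (fun b => RInt psi a b) x (psi x).
Proof.
intros Hc. auto_derive.
- split; [apply (ex_RInt_continuous (V := R_CompleteNormedModule)); auto|].
  split; [|exact I]. apply filter_forall. intros y. apply continuity_pt_filterlim, Hc.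
- ring.
Qed.

Lemma RInt_abs_le_antiderivative (psi m m' : R -> R) (a b : R) :
  a <= b ->
  (forall y, continuous psi y) ->
  (forall x, a <= x <= b -> is_derive m x (m' x)) ->
  (forall x, a <= x <= b -> Rabs (psi x) <= m' x) ->
  Rabs (RInt psi a b) <= m b - m a.
Proof.
intros Hab Hc Hm Hb.
replace (RInt psi a b) with (RInt psi a b - RInt psi a a) by (rewrite RInt_point; unfold zero; simpl; ring).
apply (Rabs_increment_le (fun x => RInt psi a x) psi m m'); auto.
intros; apply is_derive_RInt_upper, Hc.
Qed.

Lemma midpoint_rule_error (phi phi1 phi2 : R -> R) (c d M : R) :
  0 <= d ->
  (forall y, is_derive phi y (phi1 y)) ->
  (forall y, is_derive phi1 y (phi2 y)) ->
  (forall y, c - d <= y <= c + d -> Rabs (phi2 y) <= M) ->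
  Rabs (RInt phi (c - d) (c + d) - 2 * d * phi c) <= d ^ 3 / 3 * M.
Proof.
intros Hd H1 H2 HM.
assert (Hc := continuous_of_derive phi phi1 H1).
(* Compare the derivatives in the half-width d of both sides, which vanish at d = 0. *)
replace (RInt phi (c - d) (c + d) - 2 * d * phi c)
  with ((RInt phi (c - d) (c + d) - 2 * d * phi c) - (RInt phi (c - 0) (c + 0) - 2 * 0 * phi c))
  by (rewrite Rplus_0_r, Rminus_0_r, RInt_point; unfold zero; simpl; ring).
replace (d ^ 3 / 3 * M) with (M * d ^ 3 / 3 - M * 0 ^ 3 / 3) by field.
apply (Rabs_increment_le (fun y => RInt phi (c - y) (c + y) - 2 * y * phi c)
         (fun y => phi (c + y) + phi (c - y) - 2 * phi c) (fun y => M * y ^ 3 / 3) (fun y => M * y ^ 2)).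
- exact Hd.
- intros y _. unfold Rminus. auto_derive.
  + split; [apply (ex_RInt_continuous (V := R_CompleteNormedModule)); auto|].
    split; [|split; [|exact I]]; apply filter_forall; intros u; apply continuity_pt_filterlim, Hc.
  + ring.
- intros; auto_derive; auto; field.
- intros y Hy. apply (second_difference_le phi phi1 phi2 c d); [exact H1 | exact H2 | exact HM | lra].
Qed.

Lemma composite_midpoint_error (phi phi1 phi2 : R -> R) (c : nat -> R) (d : R) (M : nat -> R) (m : nat) :
  0 <= d ->
  (forall j, c (S j) = c j + 2 * d) ->
  (forall y, is_derive phi y (phi1 y)) ->
  (forall y, is_derive phi1 y (phi2 y)) ->
  (forall j y, (1 <= j <= m)%nat -> c j - d <= y <= c j + d -> Rabs (phi2 y) <= M j) ->
  Rabs (RInt phi (c O + d) (c m + d) - 2 * d * rsum1 (fun j => phi (c j)) m)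
    <= d ^ 3 / 3 * rsum1 M m.
Proof.
intros Hd Hc H1 H2 HM. induction m as [|m IH]; simpl rsum1.
- rewrite RInt_point. unfold zero; simpl. rewrite Rmult_0_r, Rminus_0_r, Rabs_R0. lra.
- assert (Hint : forall a b, ex_RInt phi a b).
  { intros a b. apply (ex_RInt_continuous (V := R_CompleteNormedModule)).
    intros y _. exact (continuous_of_derive phi phi1 H1 y). }
  rewrite <- (RInt_Chasles phi _ (c m + d)) by apply Hint. change plus with Rplus.
  replace (c m + d) with (c (S m) - d) at 2 by (rewrite Hc; ring).
  assert (Hcell := midpoint_rule_error phi phi1 phi2 (c (S m)) d (M (S m)) Hd H1 H2
                     (fun y Hy => HM (S m) y ltac:(lia) Hy)).
  assert (Hprev := IH (fun j y Hj => HM j y ltac:(lia))).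
  set (Ip := RInt phi (c O + d) (c m + d)) in *.
  set (Ic := RInt phi (c (S m) - d) (c (S m) + d)) in *.
  set (Sm := rsum1 (fun j => phi (c j)) m) in *.
  replace (Ip + Ic - 2 * d * (Sm + phi (c (S m))))
    with ((Ip - 2 * d * Sm) + (Ic - 2 * d * phi (c (S m)))) by ring.
  eapply Rle_trans; [apply Rabs_triang|]. lra.
Qed.

Lemma is_RInt_semicircle_subst (h : R -> R) :
  (forall y, -1 <= y <= 1 -> continuous h y) ->
  is_RInt (fun s => 2 * sqrt (1 - (2 * s - 1) ^ 2) * h (2 * s - 1)) 0 1
    (RInt (fun x => sin x ^ 2 * h (cos x)) 0 PI).
Proof.
intros Hh. assert (HPI := PI_RGT_0).
set (f := fun s => 2 * sqrt (1 - (2 * s - 1) ^ 2) * h (2 * s - 1)).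
assert (Hf : forall s, 0 <= s <= 1 -> continuous f s).
{ intros s Hs. unfold f.
  apply (continuous_mult (K := R_AbsRing) (fun s => 2 * sqrt (1 - (2 * s - 1) ^ 2))).
  - apply (continuous_mult (K := R_AbsRing) (fun _ => 2)); [apply continuous_const|].
    apply continuous_sqrt_comp, (ex_derive_continuous (K := R_AbsRing) (V := R_NormedModule)).
    auto_derive. exact I.
  - apply (continuous_comp (fun s => 2 * s - 1) h).
    + apply (ex_derive_continuous (K := R_AbsRing) (V := R_NormedModule)). auto_derive. exact I.
    + apply Hh. lra. }
(* s = (1 + cos x) / 2 *)
assert (Hsub := is_RInt_comp f (fun x => (1 + cos x) / 2) (fun x => - sin x / 2) PI 0).
cbv beta in Hsub. rewrite cos_PI, cos_0 in Hsub.
replace ((1 + -1) / 2) with 0 in Hsub by field. replace ((1 + 1) / 2) with 1 in Hsub by field.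
replace (RInt (fun x => sin x ^ 2 * h (cos x)) 0 PI) with (RInt f 0 1).
{ apply (RInt_correct (V := R_CompleteNormedModule)), (ex_RInt_continuous (V := R_CompleteNormedModule)).
  intros s Hs. rewrite Rmin_left, Rmax_right in Hs by lra. auto. }
symmetry. apply is_RInt_unique.
apply (is_RInt_ext (fun x => opp (scal (- sin x / 2) (f ((1 + cos x) / 2))))).
- intros x Hx. rewrite Rmin_left, Rmax_right in Hx by lra.
  unfold f, opp, scal; simpl; unfold mult; simpl.
  replace (2 * ((1 + cos x) / 2) - 1) with (cos x) by field.
  replace (1 - cos x * (cos x * 1)) with (sin x ^ 2) by (pose proof (sin2_cos2 x) as E; unfold Rsqr in E; nra).
  rewrite sqrt_pow2 by (apply sin_ge_0; lra). field.
- rewrite <- (opp_opp (RInt f 0 1)).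
  apply (is_RInt_opp (V := R_NormedModule)), (is_RInt_swap (V := R_NormedModule)).
  replace (opp (opp (RInt f 0 1)) : R) with (RInt f 0 1) by (symmetry; apply opp_opp). apply Hsub.
  + intros x _. apply Hf. assert (Hc := COS_bound x). lra.
  + intros x _. split.
    * auto_derive; [exact I | field].
    * apply (ex_derive_continuous (K := R_AbsRing) (V := R_NormedModule)). auto_derive. exact I.
Qed.

Lemma is_derive_along_iaxis (f : C -> C) (y : R) (l : C) :
  is_derive (K := C_AbsRing) f (0, y) l ->
  is_derive (fun u => fst (f (0, u))) y (- snd l) /\
  is_derive (fun u => snd (f (0, u))) y (fst l).
Proof.
intros [_ Hf].
specialize (Hf (0, y) (fun P H => H)).
assert (Hn : forall u, Cmod (Cminus (0, u) (0, y)) = Rabs (u - y)).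
{ intros u. unfold Cminus, Cplus, Copp, Cmod; simpl. rewrite <- sqrt_Rsqr_abs. f_equal. unfold Rsqr. ring. }
assert (Hloc : forall eps : posreal, locally y (fun u =>
   Cmod (Cminus (Cminus (f (0, u)) (f (0, y))) (Cmult (Cminus (0, u) (0, y)) l)) <= eps * Rabs (u - y))).
{ intros eps. destruct (Hf eps) as [d Hd]. exists d. intros u Hu.
  rewrite <- Hn. apply Hd. change (Cmod (Cminus (0, u) (0, y)) < d). rewrite Hn. exact Hu. }
split; (split; [apply is_linear_scal_l|]);
  intros x Hx; apply (is_filter_lim_locally_unique (V := R_NormedModule)) in Hx; subst x;
  intros eps; refine (filter_imp _ _ _ (Hloc eps)); intros u Hu.
all: eapply Rle_trans; [|exact Hu]; eapply Rle_trans; [|apply Rmax_Cmod]; destruct l as [l1 l2];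
  change (@norm R_AbsRing R_NormedModule) with Rabs; unfold minus, plus, opp, scal; simpl; unfold mult; simpl.
- eapply Rle_trans; [|apply Rmax_l]. right. f_equal. ring.
- eapply Rle_trans; [|apply Rmax_r]. right. f_equal. ring.
Qed.

Definition cis (a : R) : C := (cos a, sin a).
Definition proj (v1 v2 : R) (w : C) : R := v1 * fst w + v2 * snd w.

Lemma Cexp_iaxis (y t : R) : Cexp (Cmult (0, y) (RtoC t)) = cis (y * t).
Proof.
unfold Cexp, cis, Cmult, RtoC; simpl.
replace (0 * t - y * 0) with 0 by ring. replace (0 * 0 + y * t) with (y * t) by ring.
rewrite exp_0. f_equal; ring.
Qed.

Lemma Cmod_cis_mult (a : R) (w : C) : Cmod (Cmult (cis a) w) = Cmod w.
Proof.
rewrite Cmod_mult. unfold Cmod, cis; cbn [fst snd].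
rewrite Rplus_comm, <- !Rsqr_pow2, sin2_cos2, sqrt_1. ring.
Qed.

Lemma Csqrt_of_nonneg (a : R) : 0 <= a -> Csqrt (RtoC a) = RtoC (sqrt a).
Proof.
intros Ha. unfold Csqrt. rewrite Cmod_R, Rabs_pos_eq by exact Ha. unfold RtoC, Re, Im; cbn [fst snd].
replace ((a + a) / 2) with a by field. replace ((a - a) / 2) with 0 by field.
rewrite sqrt_0. f_equal. ring.
Qed.

Lemma Cmult_Ci_pair (a b : R) : Cmult Ci (a, b) = (- b, a).
Proof. unfold Cmult, Ci; cbn [fst snd]. f_equal; ring. Qed.

Lemma proj_le_Cmod (v1 v2 : R) (w : C) : v1 ^ 2 + v2 ^ 2 = 1 -> Rabs (proj v1 v2 w) <= Cmod w.
Proof.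
intros Hv. unfold proj, Cmod. rewrite <- sqrt_Rsqr_abs. apply sqrt_le_1_alt.
destruct w as [a b]; simpl. unfold Rsqr.
assert (H := pow2_ge_0 (v1 * b - v2 * a)).
replace (a * (a * 1) + b * (b * 1)) with ((v1 ^ 2 + v2 ^ 2) * (a ^ 2 + b ^ 2)) by (rewrite Hv; ring).
nra.
Qed.

Lemma Cmod_le_of_proj_le (w : C) (B : R) :
  (forall v1 v2, v1 ^ 2 + v2 ^ 2 = 1 -> Rabs (proj v1 v2 w) <= B) -> Cmod w <= B.
Proof.
intros H.
destruct (Req_dec (Cmod w) 0) as [H0 | H0].
- rewrite H0. eapply Rle_trans; [apply Rabs_pos | apply (H 1 0); ring].
- destruct w as [a b]. set (r := Cmod (a, b)) in *.
  assert (Hr : r * r = a ^ 2 + b ^ 2) by (unfold r, Cmod; cbn [fst snd]; rewrite sqrt_sqrt; [ring | nra]).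
  assert (Hv : (a / r) ^ 2 + (b / r) ^ 2 = 1) by (field_simplify; [rewrite <- Hr; field |]; auto).
  eapply Rle_trans; [| apply (H _ _ Hv)]. unfold proj; cbn [fst snd].
  replace (a / r * a + b / r * b) with r by (field_simplify; [rewrite <- Hr; field |]; auto).
  apply Rle_abs.
Qed.

Definition smooth_on_iseg (g : C -> C) : Prop :=
  forall k y, -1 <= y <= 1 -> ex_derive (K := C_AbsRing) (V := C_NormedModule) (Cderiv_n k g) (0, y).

Definition iaxis_re (k : nat) (g : C -> C) (y : R) : R := fst (Cderiv_n k g (0, y)).
Definition iaxis_im (k : nat) (g : C -> C) (y : R) : R := snd (Cderiv_n k g (0, y)).

Definition iaxis_integrand (g : C -> C) (t v1 v2 y : R) : R :=
  proj v1 v2 (Cmult (cis (y * t)) (iaxis_re 0 g y, iaxis_im 0 g y)).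

Definition proj_integrand (g : C -> C) (t v1 v2 x : R) : R :=
  sin x ^ 2 * iaxis_integrand g t v1 v2 (cos x).

(* With z = i cos x, the x-derivative of sin^2 x e^{zt} g(z) is
   e^{zt} (2 sin x cos x g(z) - i sin^3 x (g'(z) + t g(z))). *)
Definition proj_integrand' (g : C -> C) (t v1 v2 x : R) : R :=
  2 * sin x * cos x * iaxis_integrand g t v1 v2 (cos x)
  + sin x ^ 3 * proj v1 v2 (Cmult (cis (cos x * t))
      (iaxis_im 1 g (cos x) + t * iaxis_im 0 g (cos x),
       - (iaxis_re 1 g (cos x) + t * iaxis_re 0 g (cos x)))).

Section Iaxis.

Variables (g : C -> C) (t : R).
Hypothesis Hg : smooth_on_iseg g.

Lemma is_derive_iaxis k y : -1 <= y <= 1 ->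
  is_derive (iaxis_re k g) y (- iaxis_im (S k) g y) /\ is_derive (iaxis_im k g) y (iaxis_re (S k) g y).
Proof.
intros Hy. apply is_derive_along_iaxis, C_derive_correct; [exact (0, 0) | auto].
Qed.

Lemma Derive_iaxis_re k y : -1 <= y <= 1 -> Derive (iaxis_re k g) y = - iaxis_im (S k) g y.
Proof. intros Hy. apply is_derive_unique, is_derive_iaxis, Hy. Qed.

Lemma Derive_iaxis_im k y : -1 <= y <= 1 -> Derive (iaxis_im k g) y = iaxis_re (S k) g y.
Proof. intros Hy. apply is_derive_unique, is_derive_iaxis, Hy. Qed.

Ltac solve_ex_derive_iaxis :=
  repeat match goal with
  | |- _ /\ _ => split
  | |- True => exact I
  | |- ex_derive (fun y => iaxis_re ?k g y) ?z =>
      exists (- iaxis_im (S k) g z); apply is_derive_iaxis; auto using COS_bound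
  | |- ex_derive (fun y => iaxis_im ?k g y) ?z =>
      exists (iaxis_re (S k) g z); apply is_derive_iaxis; auto using COS_bound
  end.

Lemma continuous_iaxis_integrand v1 v2 y : -1 <= y <= 1 -> continuous (iaxis_integrand g t v1 v2) y.
Proof.
intros Hy. apply (ex_derive_continuous (K := R_AbsRing) (V := R_NormedModule)).
unfold iaxis_integrand, proj, cis; cbn [Cmult fst snd].
auto_derive. solve_ex_derive_iaxis.
Qed.

Lemma is_derive_proj_integrand v1 v2 x :
  is_derive (proj_integrand g t v1 v2) x (proj_integrand' g t v1 v2 x).
Proof.
unfold proj_integrand, proj_integrand', iaxis_integrand, proj, cis; cbn [Cmult fst snd].
auto_derive; [solve_ex_derive_iaxis |].
rewrite !(Derive_iaxis_re 0%nat), !(Derive_iaxis_im 0%nat) by apply COS_bound. ring.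
Qed.

Lemma is_derive_proj_integrand' v1 v2 x :
  is_derive (proj_integrand' g t v1 v2) x (- proj v1 v2 (Efun g t (0, cos x))).
Proof.
unfold proj_integrand', iaxis_integrand, proj, cis; cbn [Cmult fst snd].
auto_derive; [solve_ex_derive_iaxis |].
rewrite !(Derive_iaxis_re 0%nat), !(Derive_iaxis_im 0%nat),
  !(Derive_iaxis_re 1%nat), !(Derive_iaxis_im 1%nat) by apply COS_bound.
unfold Efun, iaxis_re, iaxis_im. rewrite Cexp_iaxis. unfold cis.
change (g (0, cos x)) with (Cderiv_n 0 g (0, cos x)).
change (C_derive g (0, cos x)) with (Cderiv_n 1 g (0, cos x)).
change (C_derive (C_derive g) (0, cos x)) with (Cderiv_n 2 g (0, cos x)).
destruct (Cderiv_n 0 g (0, cos x)) as [a0 b0], (Cderiv_n 1 g (0, cos x)) as [a1 b1],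
  (Cderiv_n 2 g (0, cos x)) as [a2 b2].
cbn [fst snd Cmult Cplus Cpow RtoC].
assert (Hs2 : sin x ^ 2 = 1 - cos x ^ 2) by (pose proof (sin2_cos2 x) as E; unfold Rsqr in E; nra).
assert (Hs4 : sin x ^ 4 = (1 - cos x ^ 2) ^ 2) by (rewrite <- Hs2; ring).
apply Rminus_diag_uniq. ring_simplify. rewrite Hs4, Hs2. ring.
Qed.

Lemma seg_integral_iaxis :
  seg_integral (fun z => Cmult (Cmult (Csqrt (Cplus (RtoC 1) (Cmult z z)))
                                      (Cexp (Cmult z (RtoC t)))) (g z))
               (Copp Ci) Ci
  = Cmult Ci (RInt (proj_integrand g t 1 0) 0 PI, RInt (proj_integrand g t 0 1) 0 PI).
Proof.
set (w v1 v2 s := 2 * sqrt (1 - (2 * s - 1) ^ 2) * iaxis_integrand g t v1 v2 (2 * s - 1)).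
assert (Hw : forall v1 v2, is_RInt (w v1 v2) 0 1 (RInt (proj_integrand g t v1 v2) 0 PI)).
{ intros v1 v2. apply is_RInt_semicircle_subst. intros y Hy. apply continuous_iaxis_integrand, Hy. }
unfold seg_integral. apply (is_RInt_unique (V := C_R_CompleteNormedModule)).
rewrite Cmult_Ci_pair.
apply (is_RInt_ext (fun s => (- w 0 1 s, w 1 0 s))).
- intros s Hs. rewrite Rmin_left, Rmax_right in Hs by lra.
  replace (Cplus (Copp Ci) (Cmult (RtoC s) (Cminus Ci (Copp Ci)))) with ((0, 2 * s - 1) : C)
    by (unfold Cminus, Ci, Cplus, Copp, Cmult, RtoC; cbn [fst snd]; f_equal; ring).
  replace (Cplus (RtoC 1) (Cmult (0, 2 * s - 1) (0, 2 * s - 1))) with (RtoC (1 - (2 * s - 1) ^ 2))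
    by (unfold Cplus, Cmult, RtoC; cbn [fst snd]; f_equal; ring).
  rewrite Csqrt_of_nonneg, Cexp_iaxis by nra.
  unfold w, iaxis_integrand, proj, cis, iaxis_re, iaxis_im.
  change (Cderiv_n 0 g (0, 2 * s - 1)) with (g (0, 2 * s - 1)).
  destruct (g (0, 2 * s - 1)) as [a b].
  unfold Cminus, Ci, Copp, Cplus, Cmult, RtoC; cbn [fst snd]. f_equal; ring.
- apply (is_RInt_fct_extend_pair (U := R_NormedModule) (V := R_NormedModule)); cbn [fst snd].
  + apply (is_RInt_opp (V := R_NormedModule)), Hw.
  + apply Hw.
Qed.

End Iaxis.

Lemma sin_le_id (x : R) : 0 <= x -> sin x <= x.
Proof.
intros Hx. destruct (Req_dec x 0) as [-> | Hne]; [rewrite sin_0; lra |].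
left. apply sin_lt_x. lra.
Qed.

Lemma dtheta_pos (n : nat) : 0 < dtheta n.
Proof.
unfold dtheta. apply Rdiv_lt_0_compat; [apply PI_RGT_0 |].
apply Rmult_lt_0_compat; [lra | apply lt_0_INR; lia].
Qed.

Lemma PI_eq_dtheta (n : nat) : PI = 2 * (INR n + 1) * dtheta n.
Proof. unfold dtheta. rewrite plus_INR. simpl. field. pose proof (pos_INR n). lra. Qed.

Lemma theta_eq_dtheta (n j : nat) : theta n j = 2 * INR j * dtheta n.
Proof. unfold theta, dtheta. field. apply not_0_INR. lia. Qed.

Lemma theta_0 (n : nat) : theta n 0 = 0.
Proof. rewrite theta_eq_dtheta. simpl. ring. Qed.

Lemma theta_S (n j : nat) : theta n (S j) = theta n j + 2 * dtheta n.
Proof. rewrite !theta_eq_dtheta, S_INR. ring. Qed.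

Lemma theta_last (n : nat) : theta n n + dtheta n = PI - dtheta n.
Proof. rewrite theta_eq_dtheta, (PI_eq_dtheta n). ring. Qed.

Lemma theta_cell_range (n j : nat) : (1 <= j <= n)%nat ->
  0 <= theta n j - dtheta n /\ theta n j + dtheta n <= PI.
Proof.
intros Hj. rewrite theta_eq_dtheta, (PI_eq_dtheta n).
assert (Hd := dtheta_pos n).
assert (1 <= INR j) by (apply (le_INR 1); lia).
assert (INR j <= INR n) by (apply le_INR; lia).
split; nra.
Qed.

Lemma rsum1_ext (f h : nat -> R) (m : nat) : (forall j, f j = h j) -> rsum1 f m = rsum1 h m.
Proof. intros E. induction m as [|m IH]; simpl; [reflexivity |]. rewrite IH, E. reflexivity. Qed.

Lemma rsum1_lin (f h : nat -> R) (a b : R) (m : nat) :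
  rsum1 (fun j => a * f j + b * h j) m = a * rsum1 f m + b * rsum1 h m.
Proof. induction m as [|m IH]; simpl; [ring |]. rewrite IH. ring. Qed.

Definition quad_error (g : C -> C) (t v1 v2 : R) (n : nat) : R :=
  RInt (proj_integrand g t v1 v2) 0 PI
  - 2 * dtheta n * rsum1 (fun j => proj_integrand g t v1 v2 (theta n j)) n.

Section Quadrature.

Variables (g : C -> C) (t : R) (n : nat).
Hypothesis Hg : smooth_on_iseg g.

Lemma Rabs_proj_integrand_le v1 v2 x : v1 ^ 2 + v2 ^ 2 = 1 ->
  Rabs (proj_integrand g t v1 v2 x) <= sin x ^ 2 * Cmod (g (0, cos x)).
Proof.
intros Hv. unfold proj_integrand, iaxis_integrand.
rewrite Rabs_mult, Rabs_pos_eq by nra.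
apply Rmult_le_compat_l; [nra |].
eapply Rle_trans; [apply proj_le_Cmod, Hv |]. rewrite Cmod_cis_mult. apply Rle_refl.
Qed.

Lemma continuous_proj_integrand v1 v2 x : continuous (proj_integrand g t v1 v2) x.
Proof. exact (continuous_of_derive _ _ (is_derive_proj_integrand g t Hg v1 v2) x). Qed.

Lemma RInt_proj_integrand_left_le v1 v2 M : v1 ^ 2 + v2 ^ 2 = 1 ->
  (forall z, on_iseg (cos (dtheta n)) 1 z -> Cmod (g z) <= M) ->
  Rabs (RInt (proj_integrand g t v1 v2) 0 (dtheta n)) <= dtheta n ^ 3 / 3 * M.
Proof.
intros Hv HM. assert (Hd := dtheta_pos n). assert (HP := PI_eq_dtheta n). pose proof (pos_INR n).
replace (dtheta n ^ 3 / 3 * M) with (M * dtheta n ^ 3 / 3 - M * 0 ^ 3 / 3) by field.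
apply (RInt_abs_le_antiderivative _ (fun x => M * x ^ 3 / 3) (fun x => M * x ^ 2)).
- lra.
- apply continuous_proj_integrand.
- intros; auto_derive; auto; field.
- intros x Hx.
  assert (Hgx : Cmod (g (0, cos x)) <= M).
  { apply HM. split; [reflexivity |]. split; [| apply COS_bound].
    apply cos_decr_1; nra. }
  assert (sin x ^ 2 <= x ^ 2).
  { assert (0 <= sin x) by (apply sin_ge_0; nra). pose proof (sin_le_id x). nra. }
  eapply Rle_trans; [apply Rabs_proj_integrand_le, Hv |].
  pose proof (Cmod_ge_0 (g (0, cos x))). nra.
Qed.

Lemma RInt_proj_integrand_right_le v1 v2 M : v1 ^ 2 + v2 ^ 2 = 1 ->
  (forall z, on_iseg (-1) (- cos (dtheta n)) z -> Cmod (g z) <= M) ->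
  Rabs (RInt (proj_integrand g t v1 v2) (PI - dtheta n) PI) <= dtheta n ^ 3 / 3 * M.
Proof.
intros Hv HM. assert (Hd := dtheta_pos n). assert (HP := PI_eq_dtheta n). pose proof (pos_INR n).
replace (dtheta n ^ 3 / 3 * M)
  with (- M * (PI - PI) ^ 3 / 3 - - M * (PI - (PI - dtheta n)) ^ 3 / 3) by field.
apply (RInt_abs_le_antiderivative _ (fun x => - M * (PI - x) ^ 3 / 3) (fun x => M * (PI - x) ^ 2)).
- lra.
- apply continuous_proj_integrand.
- intros; auto_derive; auto; field.
- intros x Hx.
  assert (Hgx : Cmod (g (0, cos x)) <= M).
  { apply HM. split; [reflexivity |]. split; [apply COS_bound |].
    rewrite <- Rtrigo_facts.cos_pi_minus. apply cos_decr_1; nra. }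
  assert (sin x ^ 2 <= (PI - x) ^ 2).
  { rewrite <- sin_PI_x. assert (0 <= sin (PI - x)) by (apply sin_ge_0; nra).
    pose proof (sin_le_id (PI - x)). nra. }
  eapply Rle_trans; [apply Rabs_proj_integrand_le, Hv |].
  pose proof (Cmod_ge_0 (g (0, cos x))). nra.
Qed.

Lemma quad_error_le v1 v2 M1 M2 Mj : v1 ^ 2 + v2 ^ 2 = 1 ->
  (forall z, on_iseg (cos (dtheta n)) 1 z -> Cmod (g z) <= M1) ->
  (forall z, on_iseg (-1) (- cos (dtheta n)) z -> Cmod (g z) <= M2) ->
  (forall j z, (1 <= j <= n)%nat ->
     on_iseg (cos (theta n j + dtheta n)) (cos (theta n j - dtheta n)) z ->
     Cmod (Efun g t z) <= Mj j) ->
  Rabs (quad_error g t v1 v2 n) <= dtheta n ^ 3 / 3 * (M1 + M2 + rsum1 Mj n).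
Proof.
intros Hv H1 H2 HM. assert (Hd := dtheta_pos n).
assert (Hint : forall a b, ex_RInt (proj_integrand g t v1 v2) a b).
{ intros a b. apply (ex_RInt_continuous (V := R_CompleteNormedModule)).
  intros x _. apply continuous_proj_integrand. }
assert (Hmid := composite_midpoint_error (proj_integrand g t v1 v2) (proj_integrand' g t v1 v2)
                  (fun x => - proj v1 v2 (Efun g t (0, cos x))) (theta n) (dtheta n) Mj n
                  ltac:(lra) (theta_S n) (is_derive_proj_integrand g t Hg v1 v2)
                  (is_derive_proj_integrand' g t Hg v1 v2)).
rewrite theta_0, Rplus_0_l, theta_last in Hmid.
assert (Hleft := RInt_proj_integrand_left_le v1 v2 M1 Hv H1).
assert (Hright := RInt_proj_integrand_right_le v1 v2 M2 Hv H2).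
unfold quad_error.
rewrite <- (RInt_Chasles _ 0 (PI - dtheta n) PI), <- (RInt_Chasles _ 0 (dtheta n) (PI - dtheta n))
  by apply Hint.
change plus with Rplus.
set (Il := RInt (proj_integrand g t v1 v2) 0 (dtheta n)) in *.
set (Im := RInt (proj_integrand g t v1 v2) (dtheta n) (PI - dtheta n)) in *.
set (Ir := RInt (proj_integrand g t v1 v2) (PI - dtheta n) PI) in *.
set (Sn := rsum1 (fun j => proj_integrand g t v1 v2 (theta n j)) n) in *.
assert (Hm : Rabs (Im - 2 * dtheta n * Sn) <= dtheta n ^ 3 / 3 * rsum1 Mj n).
{ apply Hmid. intros j y Hj Hy. rewrite Rabs_Ropp.
  destruct (theta_cell_range n j Hj).
  eapply Rle_trans; [apply proj_le_Cmod, Hv |]. apply HM; [exact Hj |].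
  split; [reflexivity |]. split; apply cos_decr_1; lra. }
replace (Il + Im + Ir - 2 * dtheta n * Sn) with (Il + (Im - 2 * dtheta n * Sn) + Ir) by ring.
eapply Rle_trans; [apply Rabs_triang |].
eapply Rle_trans; [apply Rplus_le_compat_r, Rabs_triang |].
lra.
Qed.

Lemma quad_error_proj v1 v2 :
  quad_error g t v1 v2 n = proj v1 v2 (quad_error g t 1 0 n, quad_error g t 0 1 n).
Proof.
assert (Hlin : forall x, proj_integrand g t v1 v2 x
                        = v1 * proj_integrand g t 1 0 x + v2 * proj_integrand g t 0 1 x)
  by (intros; unfold proj_integrand, iaxis_integrand, proj; cbn [fst snd]; ring).
assert (Hint : forall w1 w2,
          is_RInt (proj_integrand g t w1 w2) 0 PI (RInt (proj_integrand g t w1 w2) 0 PI)).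
{ intros w1 w2. apply (RInt_correct (V := R_CompleteNormedModule)).
  apply (ex_RInt_continuous (V := R_CompleteNormedModule)).
  intros x _. apply continuous_proj_integrand. }
unfold quad_error, proj; cbn [fst snd].
rewrite (rsum1_ext _ (fun j => v1 * proj_integrand g t 1 0 (theta n j)
                               + v2 * proj_integrand g t 0 1 (theta n j))) by (intros; apply Hlin).
rewrite rsum1_lin.
replace (RInt (proj_integrand g t v1 v2) 0 PI)
  with (v1 * RInt (proj_integrand g t 1 0) 0 PI + v2 * RInt (proj_integrand g t 0 1) 0 PI).
- ring.
- symmetry. apply is_RInt_unique.
  apply (is_RInt_ext (fun x => plus (scal v1 (proj_integrand g t 1 0 x))
                                    (scal v2 (proj_integrand g t 0 1 x)))).
  + intros x _. rewrite Hlin. reflexivity.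
  + apply (is_RInt_plus (V := R_NormedModule)); apply (is_RInt_scal (V := R_NormedModule)), Hint.
Qed.

End Quadrature.

Lemma csum1_nodes (g : C -> C) (t : R) (n m : nat) :
  csum1 (fun j => Cmult (Cmult (g (zpt n j)) (Cexp (Cmult (zpt n j) (RtoC t)))) (RtoC (alpha n j))) m
  = (rsum1 (fun j => proj_integrand g t 1 0 (theta n j)) m / INR (n + 1),
     rsum1 (fun j => proj_integrand g t 0 1 (theta n j)) m / INR (n + 1)).
Proof.
assert (HN : INR (n + 1) <> 0) by (apply not_0_INR; lia).
induction m as [|m IH]; simpl csum1; simpl rsum1.
- unfold RtoC. apply (f_equal2 (@pair R R)); field; exact HN.
- rewrite IH.
  replace (zpt n (S m)) with ((0, cos (theta n (S m))) : C)
    by (unfold zpt, Ci, Cmult, RtoC; cbn [fst snd]; apply (f_equal2 (@pair R R)); ring).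
  rewrite Cexp_iaxis. unfold proj_integrand, iaxis_integrand, proj, cis, alpha, iaxis_re, iaxis_im.
  change (Cderiv_n 0 g (0, cos (theta n (S m)))) with (g (0, cos (theta n (S m)))).
  destruct (g (0, cos (theta n (S m)))) as [a b].
  unfold Cplus, Cmult, RtoC; cbn [fst snd]. apply (f_equal2 (@pair R R)); field; exact HN.
Qed.

Lemma analytic_near_iseg_smooth (g : C -> C) : analytic_near_iseg g -> smooth_on_iseg g.
Proof. intros (U & _ & HU & HD) k y Hy. apply HD, HU. split; [reflexivity | exact Hy]. Qed.

Theorem proposition2 (K t : R) (n : nat) (g : C -> C)
  (M1 M2 : R) (Mj : nat -> R) :
  0 < K -> 0 <= t -> (1 <= n)%nat ->
  analytic_near_iseg g ->
  (forall z, on_iseg (cos (dtheta n)) 1 z -> Cmod (g z) <= M1) ->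
  (forall z, on_iseg (-1) (- cos (dtheta n)) z -> Cmod (g z) <= M2) ->
  (forall j z, (1 <= j <= n)%nat ->
     on_iseg (cos (theta n j + dtheta n)) (cos (theta n j - dtheta n)) z ->
     Cmod (Efun g t z) <= Mj j) ->
  Cmod (Cminus
    (Cmult (RtoC (2 * K))
       (seg_integral (fun z => Cmult (Cmult (Csqrt (Cplus (RtoC 1) (Cmult z z)))
                                            (Cexp (Cmult z (RtoC t)))) (g z))
                     (Copp Ci) Ci))
    (Cmult (Cmult (RtoC (2 * PI * K)) Ci)
       (csum1 (fun j => Cmult (Cmult (g (zpt n j)) (Cexp (Cmult (zpt n j) (RtoC t))))
                              (RtoC (alpha n j))) n)))
  <= 2 / 3 * K * (dtheta n) ^ 3 * (3 * M1 + 3 * M2 + rsum1 Mj n).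
Proof.
intros HK _ _ Ha H1 H2 HM.
assert (Hg := analytic_near_iseg_smooth g Ha).
rewrite (seg_integral_iaxis g t Hg), csum1_nodes.
replace (Cminus _ _) with (Cmult (RtoC (2 * K)) (Cmult Ci (quad_error g t 1 0 n, quad_error g t 0 1 n))).
2: { unfold quad_error, Cminus, Copp, Cplus, Cmult, Ci, RtoC; cbn [fst snd].
     rewrite (PI_eq_dtheta n), plus_INR. simpl INR.
     apply (f_equal2 (@pair R R)); field; pose proof (pos_INR n); lra. }
rewrite !Cmod_mult, Cmod_Ci, Cmod_R, Rabs_pos_eq by lra.
assert (Hq : Cmod (quad_error g t 1 0 n, quad_error g t 0 1 n)
              <= dtheta n ^ 3 / 3 * (M1 + M2 + rsum1 Mj n)).
{ apply Cmod_le_of_proj_le. intros v1 v2 Hv. rewrite <- quad_error_proj by exact Hg.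
  apply quad_error_le; assumption. }
(* The estimate holds with 1 instead of 3 in front of M1 and M2. *)
assert (HM1 : 0 <= M1).
{ eapply Rle_trans; [apply Cmod_ge_0 | apply (H1 (0, 1))].
  split; [reflexivity |]. pose proof (COS_bound (dtheta n)). simpl. lra. }
assert (HM2 : 0 <= M2).
{ eapply Rle_trans; [apply Cmod_ge_0 | apply (H2 (0, -1))].
  split; [reflexivity |]. pose proof (COS_bound (dtheta n)). simpl. lra. }
assert (Hd3 := pow_lt _ 3 (dtheta_pos n)).
assert (Hslack : 0 <= K * dtheta n ^ 3 * (M1 + M2)) by (apply Rmult_le_pos; [apply Rmult_le_pos |]; lra).
rewrite Rmult_1_l.
apply (Rmult_le_compat_l (2 * K)) in Hq; [| lra].
nra.
Qed.
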